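(* Let $(V,d,k,q)$ be an instance of the individually fair $k$-center with outliers problem (IF$k$CO) as defined in the context, let $l\ge 0$ be an integer, and let $(S,O,\sigma)$ be the output of the refined algorithm (Algorithm 3) described in the context, run on this instance with parameter $l$ (with arbitrary tie-breaking). Then $(S,O,\sigma)$ is a feasible solution, i.e. $|S|\le k$ and $|O|\le q$, and $$\alpha(S,O,\sigma)\le 4\cdot \mathrm{OPT},$$ where $\mathrm{OPT}$ is the minimum of $\alpha(S',O',\sigma')$ over all feasible solutions $(S',O',\sigma')$. That is, Algorithm 3 is a $4$-approximation algorithm for the IF$k$CO.
   Context: IF$k$CO instance: a finite set $V$ with $|V|=n$, a metric $d$ on $V$ (nonnegative, symmetric, $d_{ii}=0$, triangle inequality), and integers $k\ge 1$ and $q\ge 0$. For $i\in V$, $NR_q(i)$ is the distance from $i$ to its $\lceil (n-q)/k\rceil$-th nearest neighbor in $V$, where $i$ counts as its own (first) nearest neighbor. A solution is $(S,O,\sigma)$ with $S,O\subseteq V$ and $\sigma:V\setminus O\to S$; feasible if $|S|\le k$, $|O|\le q$. Its outlier-related fairness ratio is $\alpha(S,O,\sigma)=\max_{i\in V\setminus O} d_{\sigma(i)i}/NR_q(i)$. For a parameter $\beta>0$, the procedure $A(\beta)$ is: set $P:=V$, $S:=\emptyset$; while $P\ne\emptyset$ and $|S|<k$: pick $s\in P$ minimizing $NR_q(i)$ over $i\in P$, set $S:=S\cup\{s\}$, $P:=\{i\in P: d_{is}>\beta\, NR_q(i)\}$; finally set $O:=P$ and let $\sigma(i)$ be a nearest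 center in $S$ for each $i\in V\setminus O$. Algorithm 2 is $A(2)$. Algorithm 3 (input: instance and integer $l\ge0$): compute $(S,O,\sigma):=$ output of Algorithm 2; set $t:=0$, $\beta_1:=1$, $\beta_2:=2$, $\beta:=\beta_1$. While $t<l$: run $A(\beta)$ obtaining $(S_\beta,O_\beta,\sigma_\beta)$; if $|O_\beta|>q$, set $\beta_1:=\beta$; if $|O_\beta|\le q$, set $(S,O,\sigma):=(S_\beta,O_\beta,\sigma_\beta)$ and $\beta_2:=\beta$; in either case then set $\beta:=(\beta_1+\beta_2)/2$ and $t:=t+1$. Output $(S,O,\sigma)$. *)

From mathcomp Require Import all_boot all_order all_algebra.
Set Implicit Arguments. Unset Strict Implicit. Unset Printing Implicit Defensive.
Import Order.TTheory GRing.Theory Num.Theory.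
Local Open Scope ring_scope.

Section IFkCO.
Variables (R : realFieldType) (V : finType) (d : V -> V -> R) (k q : nat).

Definition is_metric : Prop :=
  [/\ forall i j, 0 <= d i j,
      forall i j, d i j = d j i,
      forall i, d i i = 0 &
      forall i j m, d i j <= d i m + d m j].

(* ceil((n - q)/k) with n = |V| (0 if n <= q) *)
Definition nr_rank : nat := ((#|V| - q + k.-1) %/ k)%N.

(* NR_q(i): distance from i to its nr_rank-th nearest neighbour in V,
   i being its own first nearest neighbour (multiset of distances, sorted). *)
Definition NR (i : V) : R :=
  nth 0 (sort <=%R [seq d i j | j <- enum V]) nr_rank.-1.

Record solution := Sol { S : {set V}; O : {set V}; sigma : V -> V }.

Definition feasible (x : solution) : Prop :=
  [/\ #|S x| <= k, #|O x| <= q & forall i, i \notin O x -> sigma x i \in S x]%N.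

(* outlier-related fairness ratio: max over non-outliers of d(sigma i, i)/NR(i)
   (maximum of an empty family taken to be 0) *)
Definition alpha (x : solution) : R :=
  \big[Num.max/0]_(i | i \notin O x) (d (sigma x i) i / NR i).

(* The while loop of A(beta), with arbitrary tie-breaking:
   loopA beta S P S' P' : starting from state (S,P) the loop can end in (S',P'). *)
Inductive loopA (beta : R) : {set V} -> {set V} -> {set V} -> {set V} -> Prop :=
| loopA_stop (Sc P : {set V}) : (P == set0) || (k <= #|Sc|)%N -> loopA beta Sc P Sc P
| loopA_step (Sc P : {set V}) (s : V) (Sf Pf : {set V}) :
    P != set0 -> (#|Sc| < k)%N -> s \in P ->
    (forall i, i \in P -> NR s <= NR i) ->
    loopA beta (s |: Sc) [set i in P | beta * NR i < d i s] Sf Pf ->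
    loopA beta Sc P Sf Pf.

Definition A_out (beta : R) (x : solution) : Prop :=
  loopA beta set0 setT (S x) (O x) /\
  (forall i, i \notin O x ->
     sigma x i \in S x /\ forall c, c \in S x -> d (sigma x i) i <= d c i).

(* binary search loop of Algorithm 3:
   bsearch t b1 b2 b cur out : with t iterations left, state (beta1,beta2,beta)
   and current solution cur, the algorithm can output out. *)
Inductive bsearch : nat -> R -> R -> R -> solution -> solution -> Prop :=
| bs_done b1 b2 b cur : bsearch 0 b1 b2 b cur cur
| bs_infeas t b1 b2 b cur r out :
    A_out b r -> (q < #|O r|)%N ->
    bsearch t b b2 ((b + b2) / 2) cur out ->
    bsearch t.+1 b1 b2 b cur out
| bs_feas t b1 b2 b cur r out :
    A_out b r -> (#|O r| <= q)%N ->
    bsearch t b1 b ((b1 + b) / 2) r out ->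
    bsearch t.+1 b1 b2 b cur out.

Definition alg3_out (l : nat) (x : solution) : Prop :=
  exists x0, A_out 2 x0 /\ bsearch l 1 2 1 x0 x.

End IFkCO.

From mathcomp Require Import all_boot all_order all_algebra.
From mathcomp Require Import zify lra.
Set Implicit Arguments.
Unset Strict Implicit.
Unset Printing Implicit Defensive.

Import Order.TTheory GRing.Theory Num.Theory.
Local Open Scope ring_scope.

(* Every output of Algorithm 3 is an output of A(beta) for some beta <= 2 with
   at most q outliers.  For A(2) itself this holds because the closed balls of
   radius NR(s) around the chosen centres are pairwise disjoint and each holds
   at least ceil((n - q)/k) points, so once k centres are chosen at most q
   points remain; the binary search only accepts such outputs and keeps
   beta <= 2.  These outputs serve every non-outlier i within beta NR(i), so
   their fairness ratio is at most 2.  Conversely every feasible solution has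
   ratio at least 1/2: some centre serves ceil((n - q)/k) points, and if the
   ratio were below 1/2 they would all lie in the open NR-ball of the one with
   the largest NR, which holds fewer points than that. *)

Section SortedCount.
Variable R : realFieldType.
Implicit Types (s : seq R) (m : nat).

Lemma count_lt_nth_sorted s m :
  sorted <=%R s -> (count (fun y => (y < s`_m)%R) s <= m)%N.
Proof.
move=> sorted_s; set P := (X in count X); have [|m_lt] := leqP (size s) m.
  exact: leq_trans (count_size _ _).
rewrite -(cat_take_drop m s) count_cat.
have -> : count P (drop m s) = 0%N.
  apply/eqP; rewrite -leqn0 leqNgt -has_count; apply/(has_nthP 0) => -[i].
  rewrite size_drop nth_drop ltn_subRL => i_lt; apply/negP; rewrite /P -leNgt.
  by apply: sorted_leq_nth; rewrite ?inE ?leq_addr //; apply: le_trans.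
by rewrite addn0 (leq_trans (count_size _ _)) // size_take m_lt.
Qed.

Lemma nth_sorted_le_count s m : sorted <=%R s -> (m < size s)%N ->
  (m.+1 <= count (fun y => (y <= s`_m)%R) s)%N.
Proof.
move=> sorted_s m_lt; set P := (X in count X).
rewrite -(cat_take_drop m.+1 s) count_cat.
suff: all P (take m.+1 s).
  by rewrite all_count (size_takel m_lt) => /eqP ->; apply: leq_addr.
apply/(all_nthP 0) => i.
rewrite (size_takel m_lt) => i_le; rewrite nth_take //.
by apply: sorted_leq_nth; rewrite ?inE ?(leq_trans i_le) //; apply: le_trans.
Qed.

End SortedCount.

Lemma card_set_count (T : finType) (p : pred T) :
  #|[set x | p x]| = count p (enum T).
Proof.
rewrite cardsE cardE /enum_mem size_filter count_filter.
by apply: eq_count => x; rewrite !inE andbT.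
Qed.

Section IFkCO.
Variables (R : realFieldType) (V : finType) (d : V -> V -> R) (k q : nat).
Hypotheses (metric_d : is_metric d) (k_gt0 : (0 < k)%N)
  (NR_gt0 : forall i, 0 < NR d k q i).

Local Notation NR := (NR d k q).
Local Notation nr := (nr_rank V k q).
Local Notation loopA := (loopA d k q).
Local Notation A_out := (A_out d k q).
Local Notation alpha := (alpha d k q).

Definition open_ball i := [set j | d i j < NR i].
Definition closed_ball i := [set j | d i j <= NR i].

Lemma nr_rank_le : (nr <= #|V| - q)%N.
Proof.
rewrite /nr_rank; have := leq_divM (#|V| - q + k.-1) k.
by rewrite -!subn1; nia.
Qed.

Lemma nr_rank_mul_ge : (#|V| - q <= nr * k)%N.
Proof. by rewrite /nr_rank -!subn1; lia. Qed.

Lemma nr_rank_pred_mul_lt : (0 < #|V| - q)%N -> (k * nr.-1 < #|V| - q)%N.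
Proof. by rewrite /nr_rank -!subn1; lia. Qed.

Lemma sorted_NR_seq i : sorted <=%R (sort <=%R [seq d i j | j <- enum V]).
Proof. by apply: sort_sorted => x y; apply: le_total. Qed.

Lemma card_open_ball_NR i : (#|open_ball i| <= nr.-1)%N.
Proof.
have := count_lt_nth_sorted nr.-1 (sorted_NR_seq i).
by rewrite (permP (permEl (perm_sort _ _))) count_map card_set_count.
Qed.

Lemma card_closed_ball_NR i : (nr <= #|closed_ball i|)%N.
Proof.
case nr_eq: nr => [|m] //.
have m_lt : (m < size (sort <=%R [seq d i j | j <- enum V]))%N.
  by rewrite size_sort size_map -cardT; have := nr_rank_le; lia.
have := nth_sorted_le_count (sorted_NR_seq i) m_lt.
by rewrite (permP (permEl (perm_sort _ _))) count_map card_set_count /NR nr_eq.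
Qed.

Lemma one_lt_nr_rank (i : V) : (1 < nr)%N.
Proof.
have [_ _ d_refl _] := metric_d.
have : (0 < #|open_ball i|)%N.
  by apply/card_gt0P; exists i; rewrite inE d_refl NR_gt0.
by have := card_open_ball_NR i; lia.
Qed.

Lemma loopA_stopped beta Sc P Sf Pf :
  loopA beta Sc P Sf Pf -> (Pf == set0) || (k <= #|Sf|)%N.
Proof. by elim. Qed.

Lemma loopA_card_le beta Sc P Sf Pf :
  loopA beta Sc P Sf Pf -> (#|Sc| <= k)%N -> (#|Sf| <= k)%N.
Proof.
elim=> // {}Sc {}P s {}Sf {}Pf _ Sc_lt _ _ _ IH _; apply: IH.
by rewrite cardsU1; case: (s \notin Sc); rewrite ?add1n ?add0n // ltnW.
Qed.

Lemma loopA_cover beta Sc P Sf Pf :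
  loopA beta Sc P Sf Pf ->
  (forall i, i \notin P -> exists2 s, s \in Sc & d i s <= beta * NR i) ->
  forall i, i \notin Pf -> exists2 s, s \in Sf & d i s <= beta * NR i.
Proof.
elim=> // {}Sc {}P s {}Sf {}Pf _ _ sP _ _ IH cover; apply: IH => i.
rewrite inE negb_and -leNgt => /orP[iP | i_near_s].
  by have [s' s'Sc near_s'] := cover i iP; exists s'; rewrite // inE s'Sc orbT.
by exists s; rewrite // setU11.
Qed.

Lemma A_out_ratio_le beta x i :
  A_out beta x -> i \notin O x -> d (sigma x i) i / NR i <= beta.
Proof.
have [_ d_sym _ _] := metric_d.
move=> [loop nearest] iO; rewrite ler_pdivrMr //.
have [|s sS near_s] := loopA_cover loop _ iO; first by move=> j; rewrite inE.
by rewrite (le_trans ((nearest i iO).2 _ sS)) // d_sym.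
Qed.

Definition ball_union (Sc : {set V}) := \bigcup_(s in Sc) closed_ball s.

Definition A2_invariant (Sc P : {set V}) :=
  [/\ forall s j, s \in Sc -> j \in P -> NR s <= NR j /\ 2 * NR j < d j s,
      [disjoint P & ball_union Sc] &
      (nr * #|Sc| <= #|ball_union Sc|)%N].

Lemma closed_ball_disjoint_union Sc P s : A2_invariant Sc P -> s \in P ->
  [disjoint closed_ball s & ball_union Sc].
Proof.
have [_ d_sym _ d_tri] := metric_d.
case=> far_centres _ _ sP; rewrite -setI_eq0; apply/eqP/setP => j.
rewrite !inE; apply/negbTE/andP => -[near_s /bigcupP[s' s'Sc]].
rewrite inE => near_s'; have [NR_le far_s'] := far_centres s' s s'Sc sP.
have := d_tri s s' j; rewrite (d_sym s' j) in near_s'; lra.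
Qed.

Lemma A2_invariant_step Sc P s : A2_invariant Sc P -> s \in P ->
  (forall i, i \in P -> NR s <= NR i) ->
  A2_invariant (s |: Sc) [set i in P | 2 * NR i < d i s].
Proof.
have [_ d_sym _ _] := metric_d.
move=> inv sP s_min; have [far_centres disj card_union] := inv.
split.
- move=> s' j; rewrite !inE => /orP[/eqP-> | s'Sc] /andP[jP far_s].
    by rewrite s_min.
  exact: far_centres.
- apply/bigcup_disjointP => s'; rewrite !inE => /orP[/eqP-> | s'Sc].
    rewrite -setI_eq0; apply/eqP/setP => j; rewrite !inE.
    apply/negbTE/andP => -[/andP[jP far_s] near_s]; rewrite d_sym in far_s.
    by have := s_min j jP; have := NR_gt0 j; lra.
  apply: disjointWl (bigcup_disjointP disj s' s'Sc).
  by apply/subsetP => j; rewrite inE => /andP[].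
- rewrite /ball_union bigcup_setU big_set1.
  have := closed_ball_disjoint_union inv sP; rewrite -(leq_card_setU _ _).2 => /eqP->.
  have := card_closed_ball_NR s; have := cardsU1 s Sc; move: card_union.
  by rewrite /ball_union; nia.
Qed.

Lemma loopA2_invariant Sc P Sf Pf :
  loopA 2 Sc P Sf Pf -> A2_invariant Sc P -> A2_invariant Sf Pf.
Proof.
elim=> // {}Sc {}P s {}Sf {}Pf _ _ sP s_min _ IH inv.
exact/IH/A2_invariant_step.
Qed.

Lemma A2_outliers_le Sf Pf : loopA 2 set0 setT Sf Pf -> (#|Pf| <= q)%N.
Proof.
move=> loop; have [_ disj card_union] : A2_invariant Sf Pf.
  apply: (loopA2_invariant loop); split=> [s j||]; first by rewrite inE.
    by rewrite /ball_union big_set0 -setI_eq0 setI0.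
  by rewrite cards0 muln0.
have /orP[/eqP-> | full] := loopA_stopped loop; first by rewrite cards0.
have : (#|Pf| + #|ball_union Sf| <= #|V|)%N.
  by move: disj; rewrite -(leq_card_setU _ _).2 => /eqP<-; apply: max_card.
have : (nr * k <= nr * #|Sf|)%N by rewrite leq_mul2l full orbT.
by have := nr_rank_mul_ge; lia.
Qed.

Definition cluster (y : solution V) c := [set i | (i \notin O y) && (sigma y i == c)].

Lemma card_cluster_le y c :
    (forall i, i \notin O y -> 2 * d (sigma y i) i < NR i) ->
  (#|cluster y c| <= nr.-1)%N.
Proof.
have [_ d_sym _ d_tri] := metric_d.
move=> close; have [->|[i0 i0c]] := set_0Vmem (cluster y c); first by rewrite cards0.
have [i ic i_max] := arg_maxP NR i0c.
apply: leq_trans (card_open_ball_NR i); apply/subset_leq_card/subsetP => j jc.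
have NR_le : NR j <= NR i := i_max j jc.
have /[!inE]/andP[iO /eqP sigma_i] : i \in cluster y c := ic.
move: jc; rewrite inE => /andP[jO /eqP sigma_j].
have := close i iO; have := close j jO; have := d_tri i j c.
by rewrite sigma_i sigma_j (d_sym i c); lra.
Qed.

Lemma card_notin_outliers y : (forall i, i \notin O y -> sigma y i \in S y) ->
  #|~: O y| = (\sum_(c in S y) #|cluster y c|)%N.
Proof.
move=> sigmaS; rewrite -sum1_card (partition_big (sigma y) (mem (S y))).
  by apply: eq_bigr => c _; rewrite sum1dep_card; apply: eq_card => i; rewrite !inE.
by move=> i; rewrite inE; apply: sigmaS.
Qed.

Lemma feasible_alpha_ge_half y (i0 : V) : feasible k q y -> 1 / 2 <= alpha y.
Proof.
move=> [S_le O_le sigmaS]; rewrite leNgt; apply/negP => alpha_lt.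
have close i : i \notin O y -> 2 * d (sigma y i) i < NR i.
  move=> iO; have : d (sigma y i) i / NR i <= alpha y by exact: le_bigmax_cond.
  by move/le_lt_trans/(_ alpha_lt); rewrite ltr_pdivrMr //; lra.
have : (\sum_(c in S y) #|cluster y c| <= #|S y| * nr.-1)%N.
  by rewrite -sum_nat_const; apply: leq_sum => c _; apply: card_cluster_le.
rewrite -card_notin_outliers //; have := cardsC (O y).
have := nr_rank_pred_mul_lt; have := one_lt_nr_rank i0; have := nr_rank_le.
have : (#|S y| * nr.-1 <= k * nr.-1)%N by rewrite leq_mul2r S_le orbT.
lia.
Qed.

Definition candidate (z : solution V) :=
  exists2 beta, beta <= 2 & A_out beta z /\ (#|O z| <= q)%N.

Lemma A2_candidate z : A_out 2 z -> candidate z.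
Proof. by move=> A_z; exists 2 => //; split; last exact: A2_outliers_le A_z.1. Qed.

Lemma bsearch_candidate t b1 b2 b cur out :
  bsearch d k q t b1 b2 b cur out -> b1 <= b <= b2 -> b2 <= 2 ->
  candidate cur -> candidate out.
Proof.
elim=> // {}t {}b1 {}b2 {}b {}cur r {}out A_r O_r _ IH /andP[b1_le b_le] b2_le cand.
  by apply: IH cand => //; apply/andP; split; lra.
apply: IH; rewrite ?(le_trans b_le) //; first by apply/andP; split; lra.
by exists b; rewrite ?(le_trans b_le).
Qed.

Lemma candidate_feasible z : candidate z -> feasible k q z.
Proof.
move=> [beta _ [[loop nearest] O_le]]; split=> //.
  by apply: loopA_card_le loop _; rewrite cards0.
by move=> i /nearest[].
Qed.

End IFkCO.

Theorem theorem2 (R : realFieldType) (V : finType) (d : V -> V -> R)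
  (k q l : nat) (x : solution V) :
  is_metric d -> (1 <= k)%N ->
  (forall i : V, 0 < NR d k q i) ->
  alg3_out d k q l x ->
  feasible k q x /\
  (forall y : solution V, feasible k q y -> alpha d k q x <= 4 * alpha d k q y).
Proof.
move=> metric_d k_gt0 NR_gt0 [x0 [A2_x0 search]].
have cand_x : candidate d k q x.
  apply: bsearch_candidate search _ _ (A2_candidate metric_d k_gt0 NR_gt0 A2_x0) => //.
  by apply/andP; split; lra.
split; first exact: candidate_feasible cand_x.
have [beta beta_le [A_x _]] := cand_x.
move=> y feas_y; apply: bigmax_le => [|i iO].
  by apply: mulr_ge0 => //; apply: bigmax_ge_id.
have := feasible_alpha_ge_half metric_d k_gt0 NR_gt0 i feas_y.
by have := A_out_ratio_le metric_d NR_gt0 A_x iO; lra.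
Qed.
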